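(* Let $r\ge 2$, let $Z$ be a set with $|Z|=m\ge 2r+1$, and let $A\subseteq Z$ with $|A|\in\{r-1,r\}$. Let $\mathcal{B}$ be the $r$-uniform family $\mathcal{B}=\{B\subseteq Z: |B|=r,\ 0<|B\cap A|<|A|\}$. Then $\mathcal{B}$ is non-separable.
   Context: Two families $\mathcal{A}_1,\mathcal{A}_2$ are cross-intersecting if $A_1\cap A_2\neq\emptyset$ for all $A_1\in\mathcal{A}_1$, $A_2\in\mathcal{A}_2$. A family $\mathcal{A}$ is non-separable if for every partition $\mathcal{A}=\mathcal{A}_1\cup\mathcal{A}_2$ (disjoint union) with $(\mathcal{A}_1,\mathcal{A}_2)$ cross-intersecting, we have $\mathcal{A}_1=\emptyset$ or $\mathcal{A}_2=\emptyset$. *)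

From mathcomp Require Import all_boot.
Set Implicit Arguments. Unset Strict Implicit. Unset Printing Implicit Defensive.

Definition cross_intersecting (T : finType) (F1 F2 : {set {set T}}) : Prop :=
  forall A1 A2, A1 \in F1 -> A2 \in F2 -> A1 :&: A2 != set0.

Definition non_separable (T : finType) (F : {set {set T}}) : Prop :=
  forall F1 F2 : {set {set T}},
    F1 :|: F2 = F -> F1 :&: F2 = set0 -> cross_intersecting F1 F2 ->
    F1 = set0 \/ F2 = set0.

From mathcomp Require Import all_boot zify.
Set Implicit Arguments. Unset Strict Implicit. Unset Printing Implicit Defensive.

(* Suppose F1 and F2 are both nonempty, and pick P in F1 and Q in F2 with
   |P ∩ Q| maximal.  A straddling set outside a set U ⊇ P ∪ Q would meet
   neither P nor Q, which is impossible; when |U| <= r + 1 there is room for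
   such a set (|Z \ U| >= r), so U must contain A.
   - If |P ∩ Q| <= r - 2, exchanging a point of P \ Q for a point of Q \ P
     gives a straddling set meeting both P and Q in more points than
     P ∩ Q, contradicting maximality.
   - If |P ∩ Q| = r - 1, then P = x + I and Q = y + I, A ⊆ P ∪ Q forces
     x, y in A, and a few explicit straddling sets made of I, x, y and
     points outside P ∪ Q violate the covering property, either through a
     third point of A inside I (|A| >= 3) or because r <= 3.
   - If |P ∩ Q| = r, then P = Q lies in F1 ∩ F2 = ∅. *)

Lemma set_between_card (T : finType) (X S : {set T}) k :
  X \subset S -> #|X| <= k <= #|S| ->
  exists C : {set T}, [/\ X \subset C, C \subset S & #|C| = k].
Proof.
move=> XS; elim: k => [|k IHk] /andP[Xk kS].
  by exists X; split=> //; apply/eqP; rewrite -leqn0.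
have [Xlt | Xge] := ltnP #|X| k.+1; last first.
  by exists X; split=> //; apply/eqP; rewrite eqn_leq Xk.
have [|C [XC CS Ck]] := IHk; first by rewrite -ltnS Xlt ltnW.
have /properP[_ [z zS zC]] : C \proper S by rewrite properEcard CS Ck.
exists (z |: C); split; first exact: subset_trans XC (subsetU1 _ _).
  by rewrite subUset sub1set zS.
by rewrite cardsU1 zC Ck.
Qed.

Lemma near_pair_decomp (T : finType) (P Q : {set T}) :
  0 < #|P| -> #|P| = #|Q| -> #|P :&: Q| = #|P|.-1 ->
  exists x y, [/\ x \notin P :&: Q, y \notin P :&: Q, x != y,
                  P = x |: (P :&: Q) & Q = y |: (P :&: Q)].
Proof.
move=> P_gt0 PQ PQ_card.
have /cards1P[x Px] : #|P :\: Q| == 1 by have := cardsID Q P; lia.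
have /cards1P[y Qy] : #|Q :\: P| == 1 by have := cardsID P Q; rewrite setIC; lia.
have /setDP[xP xQ] : x \in P :\: Q by rewrite Px set11.
have /setDP[yQ yP] : y \in Q :\: P by rewrite Qy set11.
exists x, y; split; rewrite ?inE ?(negbTE xQ) ?(negbTE yP) ?andbF //.
- by apply: contraNneq xQ => ->.
- by rewrite -[LHS](setID P Q) Px setUC.
- by rewrite -[LHS](setID Q P) Qy setUC setIC.
Qed.

Lemma setU1U1 (T : finType) (a b : T) (I : {set T}) :
  (a |: I) :|: (b |: I) = a |: (b |: I).
Proof. by apply/setP => z; rewrite !inE orbACA orbb orbA. Qed.

Section Straddling.

Variables (T : finType) (r : nat) (A : {set T}).

Definition straddling := [set B : {set T} | (#|B| == r) && (0 < #|B :&: A| < #|A|)].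

Lemma straddlingP (B : {set T}) :
  reflect [/\ #|B| = r, B :&: A != set0 & ~: B :&: A != set0] (B \in straddling).
Proof.
have split_A : #|B :&: A| + #|~: B :&: A| = #|A|.
  by rewrite -(cardsID B A) setDE [B :&: A]setIC [~: B :&: A]setIC.
rewrite inE -!card_gt0; apply: (iffP and3P) => [[/eqP -> ? ?]|[-> ? ?]]; split=> //; lia.
Qed.

Lemma exchange_meets (X : {set T}) p p' q :
  X :&: A != set0 -> p' \in X :\ p -> (p \in A -> p' \in A) ->
  (q |: (X :\ p)) :&: A != set0.
Proof.
move=> XA p'X pp'; apply/set0Pn.
have [/pp' p'A | pA] := boolP (p \in A); first by exists p'; rewrite inE setU1r.
case/set0Pn: XA => z /setIP[zX zA]; exists z; rewrite !inE zX zA !andbT.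
by apply/orP; right; apply: contraNneq pA => <-.
Qed.

Lemma setC_exchange (P : {set T}) p q :
  p \in P -> q \notin P -> ~: (q |: (P :\ p)) = p |: (~: P :\ q).
Proof.
move=> pP qP; apply/setP => z; rewrite !inE.
have [-> | zp] := eqVneq z p; first by rewrite pP /= orbF; apply: contraNneq qP => <-.
have [-> | zq] := eqVneq z q; first by rewrite (negbTE qP).
by rewrite negb_and negbK.
Qed.

Lemma straddling_exchange (P : {set T}) p p' q q' :
  P \in straddling -> p \in P -> q \notin P -> p' \in P :\ p -> q' \in ~: P :\ q ->
  (p \in A -> p' \in A) -> (q \in A -> q' \in A) -> q |: (P :\ p) \in straddling.
Proof.
case/straddlingP=> Pr PA PcA pP qP p'P q'P pp' qq'; apply/straddlingP; split.
- by rewrite cardsU1 !inE (negbTE qP) andbF -Pr (cardsD1 p P) pP.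
- exact: exchange_meets p'P pp'.
- by rewrite setC_exchange //; apply: exchange_meets q'P qq'.
Qed.

Lemma exists_two_A_monotone (D : {set T}) :
  1 < #|D| -> exists p p', [/\ p \in D, p' \in D :\ p & (p \in A -> p' \in A)].
Proof.
move=> D_gt1; have [DA | /subsetPn[p pD pA]] := boolP (D \subset A).
  case/card_gt1P: D_gt1 => p [p' [pD p'D pp']]; exists p, p'.
  by split=> [|| _]; rewrite ?inE 1?eq_sym ?pp' ?(subsetP DA).
have /set0Pn[p' p'D] : D :\ p != set0 by rewrite -card_gt0; have := cardsD1 p D; lia.
by exists p, p'; split=> // /(negP pA).
Qed.

Lemma exists_larger_overlap (P Q : {set T}) :
  P \in straddling -> Q \in straddling -> #|P :&: Q| + 2 <= r ->
  exists B, [/\ B \in straddling, #|P :&: Q| < #|P :&: B| & #|P :&: Q| < #|B :&: Q|].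
Proof.
move=> PS QS PQ_small; have /straddlingP[Pr _ _] := PS; have /straddlingP[Qr _ _] := QS.
have [|p [p' [/setDP[pP pQ] p'P pp']]] := @exists_two_A_monotone (P :\: Q).
  by have := cardsID Q P; lia.
have [|q [q' [/setDP[qQ qP] q'Q qq']]] := @exists_two_A_monotone (Q :\: P).
  by have := cardsID P Q; rewrite setIC; lia.
exists (q |: (P :\ p)); split.
- apply: straddling_exchange pp' qq' => //.
    by move: p'P; rewrite !inE => /and3P[-> _ ->].
  by move: q'Q; rewrite !inE => /and3P[-> ->].
- have sub : P :\ p \subset P :&: (q |: (P :\ p)).
    by rewrite subsetI subD1set subsetU1.
  have Pp : #|P| = #|P :\ p|.+1 by rewrite (cardsD1 p P) pP.
  by rewrite (leq_trans _ (subset_leq_card sub)) // -ltnS -Pp Pr -addn2.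
- have sub : q |: (P :&: Q) \subset (q |: (P :\ p)) :&: Q.
    apply/subsetP => z; rewrite !inE => /predU1P[-> | /andP[zP zQ]]; first by rewrite eqxx qQ.
    have zp : z != p by apply: contraTneq zQ => ->.
    by rewrite zp zP zQ orbT.
  by have := subset_leq_card sub; rewrite cardsU1 inE (negbTE qP).
Qed.

Section Separation.

Variables F1 F2 : {set {set T}}.
Hypotheses (F_cover : F1 :|: F2 = straddling) (F_cross : cross_intersecting F1 F2).
Hypothesis T_large : 2 * r + 1 <= #|T|.

Lemma straddling_parts B : B \in straddling -> B \in F1 \/ B \in F2.
Proof. by rewrite -F_cover => /setUP. Qed.

Lemma straddling_part1 B : B \in F1 -> B \in straddling.
Proof. by move=> B1; rewrite -F_cover inE B1. Qed.

Lemma straddling_part2 B : B \in F2 -> B \in straddling.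
Proof. by move=> B2; rewrite -F_cover inE B2 orbT. Qed.

Lemma disjoint_part1 (P C : {set T}) :
  P \in F1 -> C \in straddling -> [disjoint C & P] -> C \in F1.
Proof.
move=> P1 CS CP; case: (straddling_parts CS) => // C2.
by have := F_cross P1 C2; rewrite setIC setI_eq0 CP.
Qed.

Lemma small_set_compl_card (U : {set T}) : #|U| <= r.+1 -> r <= #|~: U|.
Proof. by move=> U_small; have := cardsC U; lia. Qed.

Lemma A_sub_small_cover (P Q U : {set T}) :
  P \in F1 -> Q \in F2 -> P :|: Q \subset U -> #|U| <= r.+1 -> A \subset U.
Proof.
move=> P1 Q2 /[!subUset] /andP[PU QU] U_small.
apply/subsetP => a aA; apply/negPn/negP => aU.
have /straddlingP[Pr PA _] := straddling_part1 P1.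
have r_gt0 : 0 < r by rewrite -Pr card_gt0; apply: contraNneq PA => ->; rewrite set0I.
have aCU : [set a] \subset ~: U by rewrite sub1set inE aU.
have [|C [aC CU Cr]] := set_between_card (k := r) aCU.
  by rewrite cards1 r_gt0 small_set_compl_card.
have C_disj (Y : {set T}) : Y \subset U -> [disjoint C & Y].
  by move=> YU; rewrite disjoints_subset (subset_trans CU) // setCS.
have CS : C \in straddling.
  apply/straddlingP; split=> //; apply/set0Pn.
    by exists a; rewrite inE aA andbT -sub1set.
  case/set0Pn: PA => z /setIP[zP zA]; exists z; rewrite !inE zA andbT.
  by apply: contraTN (subsetP PU z zP) => /(subsetP CU); rewrite inE.
case: (straddling_parts CS) => [C1 | C2].
  by have := F_cross C1 Q2; rewrite setI_eq0 C_disj.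
by have := F_cross P1 C2; rewrite setIC setI_eq0 C_disj.
Qed.

Section NearPair.

Variables (I : {set T}) (x y : T).
Hypotheses (xI : x \notin I) (yI : y \notin I) (xy : x != y) (I_card : #|I| = r.-1).
Hypotheses (P1 : x |: I \in F1) (Q2 : y |: I \in F2).

Let r_gt0 : 0 < r.
Proof. by have /straddlingP[<- _ _] := straddling_part1 P1; rewrite cardsU1 xI. Qed.

Let pair_union_card : #|x |: (y |: I)| = r.+1.
Proof. by rewrite !cardsU1 !inE negb_or xy xI yI I_card /= !add1n prednK. Qed.

Let A_sub_pair_union : A \subset x |: (y |: I).
Proof.
rewrite -setU1U1; apply: A_sub_small_cover P1 Q2 (subxx _) _.
by rewrite setU1U1 pair_union_card.
Qed.

Let fresh_points : r <= #|~: (x |: (y |: I))|.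
Proof. by rewrite small_set_compl_card ?pair_union_card. Qed.

Lemma near_pair_x_in_A : x \in A.
Proof.
have /straddlingP[_ _ /set0Pn[a /setIP[]]] := straddling_part2 Q2.
rewrite inE => aQ aA; have /setU1P[<- // | aQ'] := subsetP A_sub_pair_union a aA.
by rewrite aQ' in aQ.
Qed.

Lemma near_pair_y_in_A : y \in A.
Proof.
have /straddlingP[_ _ /set0Pn[a /setIP[]]] := straddling_part1 P1.
rewrite inE => aP aA; move: (subsetP A_sub_pair_union a aA) aP.
by rewrite !inE => /or3P[-> | /eqP <- | ->]; rewrite ?orbT.
Qed.

Lemma near_pair_A_small : #|A| <= 2.
Proof.
rewrite leqNgt; apply/negP => A_gt2.
have [z zA zxy] : exists2 z, z \in A & z \notin [set x; y].
  apply/subsetPn; apply: contraTN A_gt2 => /subset_leq_card A2.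
  by rewrite -leqNgt (leq_trans A2) // cards2 ltnS leq_b1.
have zI : z \in I.
  move: (subsetP A_sub_pair_union z zA) zxy.
  by rewrite !inE => /or3P[-> | -> | ->]; rewrite ?orbT.
have /set0Pn[w] : ~: (x |: (y |: I)) != set0.
  by rewrite -card_gt0 (leq_trans r_gt0 fresh_points).
rewrite !inE !negb_or => /and3P[wx wy wI].
have BS : w |: I \in straddling.
  apply/straddlingP; split; first by rewrite cardsU1 wI I_card add1n prednK.
    by apply/set0Pn; exists z; rewrite !inE zI zA orbT.
  by apply/set0Pn; exists x; rewrite !inE negb_or xI near_pair_x_in_A eq_sym wx.
have small_union a : a \notin I -> w != a -> #|(w |: I) :|: (a |: I)| <= r.+1.
  by move=> aI wa; rewrite setU1U1 !cardsU1 !inE negb_or wa wI aI I_card /= !add1n prednK.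
case: (straddling_parts BS) => [B1 | B2].
  have BQ_small := small_union _ yI wy.
  have := subsetP (A_sub_small_cover B1 Q2 (subxx _) BQ_small) x near_pair_x_in_A.
  by rewrite setU1U1 !inE (eq_sym x w) (negbTE wx) (negbTE xy) (negbTE xI).
have PB_small : #|(x |: I) :|: (w |: I)| <= r.+1 by rewrite setUC small_union.
have := subsetP (A_sub_small_cover P1 B2 (subxx _) PB_small) y near_pair_y_in_A.
by rewrite setU1U1 !inE !(eq_sym y) (negbTE wy) (negbTE xy) (negbTE yI).
Qed.

Lemma near_pair_r_gt3 : 2 <= r -> 3 < r.
Proof.
move=> r_ge2; rewrite ltnNge; apply/negP => r_le3.
(* C := y + W avoids P, hence lies in F1; D := y + i + (W \ w) then fits
   together with Q, or with C, in a set of size <= r + 1 missing x.  Only the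
   first of these uses r <= 3. *)
have [|W [_ W_fresh W_card]] :=
  set_between_card (k := r.-1) (sub0set (~: (x |: (y |: I)))).
  by rewrite cards0 (leq_trans (leq_pred r) fresh_points).
have r1_gt0 : 0 < r.-1 by rewrite ltn_predRL.
have /set0Pn[w wW] : W != set0 by rewrite -card_gt0 W_card.
have /set0Pn[i iI] : I != set0 by rewrite -card_gt0 I_card.
have W'_card : #|W :\ w| = r.-2 by rewrite -W_card (cardsD1 w W) wW add1n.
have [xW yW iW] : [/\ x \notin W, y \notin W & i \notin W].
  by split; apply/negP => /(subsetP W_fresh); rewrite !inE ?eqxx ?iI ?orbT //=.
have W'W : W :\ w \subset W := subD1set W w.
have [xW' yW' iW'] : [/\ x \notin W :\ w, y \notin W :\ w & i \notin W :\ w].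
  by split; [move: xW | move: yW | move: iW]; apply: contra; apply: (subsetP W'W).
have [xi yi] : x != i /\ y != i by split; apply: contraTneq iI => <-.
set C := y |: W; set D := y |: (i |: (W :\ w)).
have CS : C \in straddling.
  apply/straddlingP; split; first by rewrite cardsU1 yW W_card add1n prednK.
    by apply/set0Pn; exists y; rewrite inE setU11 near_pair_y_in_A.
  by apply/set0Pn; exists x; rewrite !inE negb_or xy xW near_pair_x_in_A.
have DS : D \in straddling.
  apply/straddlingP; split.
  - by rewrite !cardsU1 in_setU1 negb_or yi yW' iW' W'_card /= !add1n !prednK.
  - by apply/set0Pn; exists y; rewrite inE setU11 near_pair_y_in_A.
  - apply/set0Pn; exists x.
    by rewrite in_setI in_setC !in_setU1 !negb_or xy xi xW' near_pair_x_in_A.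
have C1 : C \in F1.
  apply: disjoint_part1 P1 CS _; rewrite disjoints_subset.
  apply/subsetP => u /setU1P[-> | /(subsetP W_fresh)]; first by rewrite !inE negb_or eq_sym xy.
  by rewrite !inE !negb_or => /and3P[-> _ ->].
case: (straddling_parts DS) => [D1 | D2].
  have DQ : D :|: (y |: I) \subset (W :\ w) :|: (y |: I).
    rewrite subUset subsetUr andbT.
    apply/subsetP => u /setU1P[-> | /setU1P[-> | uW']];
      by rewrite in_setU ?setU11 ?(setU1r y iI) ?uW' ?orbT.
  have DQ_small : #|(W :\ w) :|: (y |: I)| <= r.+1.
    rewrite (leq_trans (leq_card_setU _ _)) // cardsU1 yI I_card.
    by rewrite W'_card add1n prednK // addnC -addn1 leq_add2l -subn2 leq_subLR.
  have := subsetP (A_sub_small_cover D1 Q2 DQ DQ_small) x near_pair_x_in_A.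
  by rewrite in_setU in_setU1 (negbTE xW') (negbTE xy) (negbTE xI).
have CD : C :|: D \subset i |: C.
  apply/subsetP => u; rewrite in_setU !in_setU1 in_setD1.
  by case: (u == i); case: (u == y); case: (u \in W); case: (u != w).
have CD_small : #|i |: C| <= r.+1.
  by have /straddlingP[C_card _ _] := CS; rewrite cardsU1 C_card -add1n leq_add2r leq_b1.
have := subsetP (A_sub_small_cover C1 D2 CD CD_small) x near_pair_x_in_A.
by rewrite !inE (negbTE xi) (negbTE xy) (negbTE xW).
Qed.

End NearPair.

Hypotheses (r_ge2 : 2 <= r) (A_card : #|A| = r.-1 \/ #|A| = r).

Lemma no_near_cross_pair (P Q : {set T}) :
  P \in F1 -> Q \in F2 -> #|P :&: Q| = r.-1 -> False.
Proof.
move=> P1 Q2 PQ_near.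
have /straddlingP[Pr _ _] := straddling_part1 P1.
have /straddlingP[Qr _ _] := straddling_part2 Q2.
have P_gt0 : 0 < #|P| by rewrite Pr ltnW.
have PQ_near' : #|P :&: Q| = #|P|.-1 by rewrite Pr.
have [x [y [xI yI xy eP eQ]]] := near_pair_decomp P_gt0 (etrans Pr (esym Qr)) PQ_near'.
rewrite eP in P1; rewrite eQ in Q2.
have := near_pair_A_small xI yI xy PQ_near P1 Q2.
have := near_pair_r_gt3 xI yI xy PQ_near P1 Q2 r_ge2.
by case: A_card => ->; lia.
Qed.

Hypothesis F_disj : F1 :&: F2 = set0.

Lemma no_cross_pair (P Q : {set T}) : P \in F1 -> Q \in F2 -> False.
Proof.
move=> P1 Q2.
case: (@arg_maxnP _ (P, Q) [pred PQ | PQ \in setX F1 F2] (fun PQ => #|PQ.1 :&: PQ.2|)).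
  by rewrite !inE P1 Q2.
move=> [{}P {}Q] /[!inE] /andP[{}P1 {}Q2] /= PQ_max.
have max_overlap B C : B \in F1 -> C \in F2 -> #|B :&: C| <= #|P :&: Q|.
  by move=> B1 C2; apply: (PQ_max (B, C)); rewrite !inE B1 C2.
have /straddlingP[Pr _ _] := straddling_part1 P1.
have /straddlingP[Qr _ _] := straddling_part2 Q2.
have PQ_le : #|P :&: Q| <= r by rewrite -Pr subset_leq_card ?subsetIl.
have [PQ_small | PQ_big] := leqP (#|P :&: Q| + 2) r.
  have [B [BS PB BQ]] :=
    exists_larger_overlap (straddling_part1 P1) (straddling_part2 Q2) PQ_small.
  case: (straddling_parts BS) => [B1 | B2].
    by have := max_overlap B Q B1 Q2; rewrite leqNgt BQ.
  by have := max_overlap P B P1 B2; rewrite leqNgt PB.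
have [PQ_near | PQ_full] : #|P :&: Q| = r.-1 \/ #|P :&: Q| = r by lia.
  exact: no_near_cross_pair P1 Q2 PQ_near.
have PQ_P : P :&: Q = P by apply/eqP; rewrite eqEcard subsetIl PQ_full Pr leqnn.
have PQ_Q : P :&: Q = Q by apply/eqP; rewrite eqEcard subsetIr PQ_full Qr leqnn.
have : P \in F1 :&: F2 by rewrite inE P1 -PQ_P PQ_Q Q2.
by rewrite F_disj inE.
Qed.

End Separation.

End Straddling.

Theorem proposition3p3 (T : finType) (r : nat) (A : {set T}) :
  2 <= r ->
  2 * r + 1 <= #|T| ->
  (#|A| = r.-1 \/ #|A| = r) ->
  non_separable [set B : {set T} | (#|B| == r) && (0 < #|B :&: A| < #|A|)].
Proof.
move=> r_ge2 T_large A_card F1 F2 F_cover F_disj F_cross.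
have [-> | [P P1]] := set_0Vmem F1; first by left.
have [-> | [Q Q2]] := set_0Vmem F2; first by right.
by case: (no_cross_pair F_cover F_cross T_large r_ge2 A_card F_disj P1 Q2).
Qed.
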